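(* For every integer $N\ge 0$, let $T_{1\times 4}(5,N)$ be the number of tilings of a $5\times n$ rectangle, $n=4N/5$, by $N$ tiles of size $1\times 4$ (and $0$ if $4N/5\notin\mathbb{Z}$). Then, as formal power series, \[ \sum_{N\ge 0} T_{1\times 4}(5,N)\,z^N=\frac{(1-z^5)^3}{1-6z^5+6z^{10}-4z^{15}+z^{20}}. \]
   Context: A tiling of an $m\times n$ rectangle (width $m$, length $n$, made of $mn$ unit squares) by $a\times b$ tiles is a partition of the rectangle into non-overlapping axis-parallel $a\times b$ rectangles with integer corner coordinates, each placed in either of its two orientations. Tilings related by reflections or rotations of the rectangle are counted as distinct. The empty tiling counts once for $N=0$. *)

From HB Require Import structures.
From mathcomp Require Import all_boot all_order all_algebra.
Unset Printing Implicit Defensive.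
Import Order.TTheory GRing.Theory Num.Theory.

Definition cell (m n : nat) := ('I_m * 'I_n)%type.

Definition block (m n a b : nat) (i j : nat) : {set cell m n} :=
  [set c : cell m n | (i <= c.1 < i + a) && (j <= c.2 < j + b)].

Definition is_tile (m n a b : nat) (A : {set cell m n}) : bool :=
  [exists i : 'I_m.+1, exists j : 'I_n.+1,
     ((i + a <= m) && (j + b <= n) && (A == block m n a b i j))
  || ((i + b <= m) && (j + a <= n) && (A == block m n b a i j))].

Definition tiling (m n a b : nat) (P : {set {set cell m n}}) : bool :=
  partition P [set: cell m n] && [forall A in P, is_tile m n a b A].

Definition num_tilings (m n a b N : nat) : nat :=
  #|[set P : {set {set cell m n}} | tiling m n a b P && (#|P| == N)]|.

Definition T14_5 (N : nat) : nat :=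
  if 5 %| 4 * N then num_tilings 5 (4 * N %/ 5) 1 4 N else 0.

Local Open Scope ring_scope.

Definition numer : {poly int} := (1 - 'X^5) ^+ 3.
Definition denom : {poly int} :=
  1 - 6%:R *: 'X^5 + 6%:R *: 'X^10 - 4%:R *: 'X^15 + 'X^20.

From HB Require Import structures.
From mathcomp Require Import all_boot all_order all_algebra.
From mathcomp Require Import zify ring.
Import GRing.Theory.
Set Implicit Arguments. Unset Strict Implicit.

(* In a tiling, the tile covering the first cell in column-major order is the
   horizontal or the vertical tile starting there; removing it leaves a tiling
   of a smaller region.  The regions so obtained are described by a profile,
   the number of covered cells in each row, so tilings obey a recursion on
   profiles.
   Once every row has its first cell covered, deleting the first column
   lowers every entry of the profile by one; hence the counts for n + 1
   columns are integer combinations of counts for n columns over profiles,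
   i.e. a transfer operator on formal combinations of profiles.  Evaluating
   its iterates on the zero profile shows that the number a_n of tilings of
   5 x n satisfies a_(n+16) - 6 a_(n+12) + 6 a_(n+8) - 4 a_(n+4) + a_n = 0;
   this recurrence, the initial values and the vanishing of T(N) for 5 not
   dividing N give the coefficient identity. *)

Section Tilings.
Variables (C : finType) (tile : pred {set C}).
Hypothesis tile_neq0 : forall T, tile T -> T != set0.

Definition tilings_by (U : {set C}) (N : nat) : {set {set {set C}}} :=
  [set P | [&& partition P U, [forall A in P, tile A] & #|P| == N]].

Lemma card_tilings0 U : #|tilings_by U 0| = (U == set0).
Proof.
have -> : tilings_by U 0 = if U == set0 then [set set0] else set0.
  apply/setP => P; rewrite !inE cards_eq0.
  have [->|nP] := eqVneq P set0; last first.
    by rewrite !andbF; case: (U == set0); rewrite inE ?(negbTE nP).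
  rewrite andbT /partition /trivIset /cover !big_set0 cards0 inE eqxx andbT eq_sym.
  by case: (U == set0); rewrite inE ?eqxx //=; apply/forall_inP => A; rewrite inE.
by case: eqP; rewrite ?cards1 ?cards0.
Qed.

Lemma tilings_set0S N : tilings_by set0 N.+1 = set0.
Proof.
apply/setP => P; rewrite !inE; apply/negP.
case/and3P => /and3P [/eqP coverP _ _] /forall_inP tileP /eqP cardP.
have /set0Pn [A AP] : P != set0 by rewrite -card_gt0 cardP.
have [y yA] := set0Pn _ (tile_neq0 (tileP A AP)).
by have := subsetP (bigcup_sup A AP) y yA; rewrite -/(cover P) coverP inE.
Qed.

Lemma tile_notin_tilings U T N P :
  tile T -> P \in tilings_by (U :\: T) N -> T \notin P.
Proof.
move=> /tile_neq0 /set0Pn [y yT]; rewrite inE => /and3P [/and3P [/eqP coverP _ _] _ _].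
by apply/negP => TP; have := subsetP (bigcup_sup T TP) y yT; rewrite -/(cover P) coverP inE yT.
Qed.

Lemma tilings_setD1 U T N P :
  P \in tilings_by U N.+1 -> T \in P -> P :\ T \in tilings_by (U :\: T) N.
Proof.
rewrite !inE => /and3P [/and3P [/eqP coverP trivP n0P] /forall_inP tileP /eqP cardP] TP.
rewrite /partition coverD1 // coverP trivIsetD // eqxx !inE negb_and n0P orbT /=.
move: cardP; rewrite (cardsD1 T) TP add1n => -[->]; rewrite eqxx andbT.
by apply/forall_inP => A /setD1P [_ /tileP].
Qed.

Lemma tilings_setU1 (U T : {set C}) N P : tile T -> T \subset U ->
  P \in tilings_by (U :\: T) N -> T |: P \in tilings_by U N.+1.
Proof.
move=> tT TU PT; have TnP := tile_notin_tilings tT PT.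
move: PT; rewrite !inE => /and3P [/and3P [/eqP coverP trivP n0P] /forall_inP tileP /eqP cardP].
have [trivTP _] : trivIset (T |: P) /\ T \notin P.
  apply: trivIsetU1 trivP n0P => B BP; rewrite disjoint_sym disjoints_subset.
  by rewrite (subset_trans (bigcup_sup B BP)) // -/(cover P) coverP setDE subsetIr.
rewrite /partition trivTP cardsU1 TnP cardP eqxx andbT !inE negb_or n0P.
rewrite [set0 == T]eq_sym tile_neq0 //=.
rewrite /cover bigcup_setU big_set1 -/(cover P) coverP -{1}(setIidPr TU) setID eqxx.
by apply/forall_inP => A /setU1P [-> // | /tileP].
Qed.

Lemma card_tilingsS (U : {set C}) N x : x \in U ->
  #|tilings_by U N.+1| =
    \sum_(T | [&& tile T, x \in T & T \subset U]) #|tilings_by (U :\: T) N|.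
Proof.
move=> xU; rewrite -sum1_card.
pose at_x := [pred T | [&& tile T, x \in T & T \subset U]].
rewrite (partition_big (pblock^~ x) at_x) /=; last first.
  move=> P; rewrite inE => /and3P [/and3P [/eqP coverP _ _] /forall_inP tileP _].
  have xP : x \in cover P by rewrite coverP.
  by rewrite tileP ?pblock_mem // mem_pblock xP -coverP /= (bigcup_sup _ (pblock_mem xP)).
apply: eq_bigr => T /and3P [tT xT TU]; rewrite sum1dep_card.
rewrite -(card_in_imset (f := fun P => T |: P) (D := tilings_by (U :\: T) N)); last first.
  move=> P1 P2 /(tile_notin_tilings tT) /setU1K P1K /(tile_notin_tilings tT) /setU1K P2K.
  by rewrite -{2}P1K -{2}P2K /= => ->.
apply: eq_card => P; rewrite inE; apply/andP/imsetP.
- case=> PT /eqP TP.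
  have /(pblock_mem) : x \in cover P.
    by move: PT; rewrite inE => /and3P [/and3P [/eqP -> _ _] _ _].
  rewrite TP => TinP.
  by exists (P :\ T); [exact: tilings_setD1 | rewrite setD1K].
- case=> P' P'T ->; split; first exact: tilings_setU1.
  move: (tilings_setU1 tT TU P'T); rewrite inE => /and3P [/and3P [_ trivP _] _ _].
  by rewrite (def_pblock trivP (setU11 T P')).
Qed.

End Tilings.

Section Splice.
Variable T : Type.
Implicit Types s t : seq T.

Definition splice s i t := take i s ++ t ++ drop (i + size t) s.

Lemma size_splice s i t : i + size t <= size s -> size (splice s i t) = size s.
Proof.
move=> le_s; rewrite !size_cat size_take size_drop.
by case: ltnP; lia.
Qed.

Lemma nth_splice x0 s i t j : i + size t <= size s ->
  nth x0 (splice s i t) j = if i <= j < i + size t then nth x0 t (j - i) else nth x0 s j.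
Proof.
move=> le_s; have le_i : i <= size s by lia.
rewrite nth_cat size_takel // nth_cat nth_drop.
case: ltnP => [lt_ji | le_ij]; first by rewrite nth_take // leqNgt lt_ji.
case: ltnP => [lt_t | le_t] /=; first by have -> : j < i + size t by lia.
have -> : (j < i + size t) = false by lia.
by congr nth; lia.
Qed.

Lemma cat_take_segment s i j : take i s ++ take j (drop i s) ++ drop (i + j) s = s.
Proof. by rewrite addnC -drop_drop !cat_take_drop. Qed.

Lemma sumn_map_splice (f : T -> nat) s i t :
  sumn (map f (splice s i t)) + sumn (map f (take (size t) (drop i s))) =
  sumn (map f s) + sumn (map f t).
Proof.
rewrite -[in RHS](cat_take_segment s i (size t)) /splice !map_cat !sumn_cat; lia.
Qed.

Lemma count_splice (a : pred T) s i t :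
  count a (splice s i t) + count a (take (size t) (drop i s)) = count a s + count a t.
Proof. by rewrite -[in RHS](cat_take_segment s i (size t)) /splice !count_cat; lia. Qed.

End Splice.

Lemma map_splice T U (f : T -> U) s i t :
  map f (splice s i t) = splice (map f s) i (map f t).
Proof. by rewrite /splice !map_cat map_take map_drop size_map. Qed.

Lemma mem_splice (T : eqType) (s : seq T) i t x :
  x \in splice s i t -> (x \in s) || (x \in t).
Proof. by rewrite !mem_cat => /or3P [/mem_take -> | -> | /mem_drop ->]; rewrite ?orbT. Qed.

(* A profile p lists, row by row, how many leading cells are already covered;
   the first uncovered cell in column-major order is (prow p, pmin p). *)
Section Profiles.
Implicit Types p : seq nat.

Definition pmin p := foldr minn (head 0 p) p.
Definition prow p := index (pmin p) p.
Definition area n p := sumn [seq n - x | x <- p].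

Lemma pmin_le p x : x \in p -> pmin p <= x.
Proof.
rewrite /pmin; elim: p (head 0 p) => //= y p IHp d.
by rewrite inE => /predU1P [-> | /(IHp d)]; lia.
Qed.

Lemma pmin_mem p : p != [::] -> pmin p \in p.
Proof.
have foldr_mem d s : foldr minn d s \in d :: s.
  elim: s => [|y s IHs] /=; first exact: mem_head.
  rewrite /minn; case: ltnP => _; first by rewrite !inE eqxx orbT.
  by move: IHs; rewrite !inE => /orP [->|->]; rewrite ?orbT.
case: p => // y p _; have := foldr_mem y (y :: p).
by rewrite /pmin /= !inE; case/orP => [->|].
Qed.

Lemma pmin_ge p m : p != [::] -> (forall x, x \in p -> m <= x) -> m <= pmin p.
Proof. by move=> /pmin_mem pP; apply. Qed.

Lemma prow_lt p : p != [::] -> prow p < size p.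
Proof. by move=> /pmin_mem; rewrite -index_mem. Qed.

Lemma nth_prow p : p != [::] -> nth 0 p (prow p) = pmin p.
Proof. by move=> /pmin_mem /nth_index. Qed.

Lemma pmin_le_nth p i : i < size p -> pmin p <= nth 0 p i.
Proof. by move=> /(mem_nth 0) /pmin_le. Qed.

Lemma pmin_lt_before_prow p i : i < prow p -> pmin p < nth 0 p i.
Proof.
move=> lt_i; have /negbT := before_find 0 lt_i.
have := pmin_le_nth (leq_trans lt_i (index_size _ _)); rewrite /= ltn_neqAle => ->.
by rewrite eq_sym andbT.
Qed.

Lemma pmin_splice p i t : splice p i t != [::] ->
  (forall x, x \in t -> pmin p <= x) -> pmin p <= pmin (splice p i t).
Proof.
move=> s0 le_t; apply: pmin_ge => // x /mem_splice /orP [/pmin_le // | /le_t //].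
Qed.

Lemma pmin_map_predn p : pmin (map predn p) = (pmin p).-1.
Proof.
have foldr_predn d s : foldr minn d.-1 (map predn s) = (foldr minn d s).-1.
  by elim: s => //= y s ->; lia.
by case: p => // y p; apply: foldr_predn.
Qed.

Lemma prow_map_predn p : 0 < pmin p -> prow (map predn p) = prow p.
Proof.
move=> pos; rewrite /prow pmin_map_predn /index find_map.
by apply: eq_in_find => x /pmin_le le_x /=; apply/eqP/eqP; lia.
Qed.

Lemma area_map_predn n p : 0 < pmin p -> area n (map predn p) = area n.+1 p.
Proof.
move=> pos; rewrite /area -map_comp; congr sumn.
by apply/eq_in_map => x /pmin_le le_x /=; lia.
Qed.

End Profiles.

Section Placements.
Variable k : nat.
Hypothesis k_gt0 : 0 < k.
Implicit Types p q : seq nat.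

Definition hplace p := splice p (prow p) [:: pmin p + k].
Definition vfits p :=
  (prow p + k <= size p) && all (pred1 (pmin p)) (take k (drop (prow p) p)).
Definition vplace p := splice p (prow p) (nseq k (pmin p).+1).

Lemma hplace_neq0 p : hplace p != [::].
Proof. by rewrite -size_eq0 /hplace /splice !size_cat /=; lia. Qed.

Lemma size_hplace p : p != [::] -> size (hplace p) = size p.
Proof. by move=> /prow_lt lt_r; rewrite size_splice // addn1. Qed.

Lemma nth_hplace p i : p != [::] ->
  nth 0 (hplace p) i = if i == prow p then pmin p + k else nth 0 p i.
Proof.
move=> /prow_lt lt_r; rewrite nth_splice ?addn1 // ltnS -eqn_leq eq_sym.
by case: eqP => [->|]; rewrite ?subnn.
Qed.

Lemma vplace_neq0 p : vplace p != [::].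
Proof. by rewrite -size_eq0 /vplace /splice !size_cat size_nseq; lia. Qed.

Lemma vfits_segment p : vfits p -> take k (drop (prow p) p) = nseq k (pmin p).
Proof.
case/andP => le_k /all_pred1P ->; congr nseq.
by rewrite size_takel // size_drop leq_subRL // index_size.
Qed.

Lemma size_vplace p : vfits p -> size (vplace p) = size p.
Proof. by case/andP => le_k _; rewrite size_splice // size_nseq. Qed.

Lemma nth_vplace p i : vfits p ->
  nth 0 (vplace p) i = if prow p <= i < prow p + k then (pmin p).+1 else nth 0 p i.
Proof.
case/andP => le_k _; rewrite nth_splice ?size_nseq //.
by case: ifP => // /andP [le_i lt_i]; rewrite nth_nseq ifT //; lia.
Qed.

Lemma vfits_nth p i : vfits p -> prow p <= i < prow p + k -> nth 0 p i = pmin p.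
Proof.
move=> /[dup] /vfits_segment seg /andP [le_k _] /andP [le_i lt_i].
have := congr1 (nth 0 ^~ (i - prow p)) seg; rewrite /= nth_take; last by lia.
by rewrite nth_drop nth_nseq subnKC //; case: ltnP; lia.
Qed.

Lemma area_hplace n p : p != [::] -> pmin p + k <= n -> area n (hplace p) + k = area n p.
Proof.
move=> p0 le_n; have := sumn_map_splice (fun x => n - x) p (prow p) [:: pmin p + k].
by rewrite (drop_nth 0 (prow_lt p0)) nth_prow //= take0 /=; rewrite /area /hplace; lia.
Qed.

Lemma area_vplace n p : vfits p -> pmin p < n -> area n (vplace p) + k = area n p.
Proof.
move=> fits lt_n; have := sumn_map_splice (fun x => n - x) p (prow p) (nseq k (pmin p).+1).
rewrite size_nseq vfits_segment // !map_nseq !sumn_nseq /area /vplace.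
have -> : n - pmin p = (n - (pmin p).+1).+1 by lia.
rewrite mulSn; lia.
Qed.

Lemma hplace_map_predn p : 0 < pmin p -> hplace (map predn p) = map predn (hplace p).
Proof.
move=> pos; rewrite /hplace map_splice pmin_map_predn prow_map_predn //=.
by congr (splice _ _ [:: _]); lia.
Qed.

Lemma vplace_map_predn p : 0 < pmin p -> vplace (map predn p) = map predn (vplace p).
Proof.
move=> pos; rewrite /vplace map_splice map_nseq pmin_map_predn prow_map_predn //.
by congr (splice _ _ (nseq _ _)); lia.
Qed.

Lemma vfits_map_predn p : 0 < pmin p -> vfits (map predn p) = vfits p.
Proof.
move=> pos; rewrite /vfits prow_map_predn // pmin_map_predn size_map -map_drop -map_take.
rewrite all_map; congr andb; apply: eq_in_all => x /mem_take /mem_drop /pmin_le le_x /=.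
by apply/eqP/eqP; lia.
Qed.

Lemma count0_hplace p : p != [::] -> pmin p = 0 ->
  count (pred1 0) (hplace p) < count (pred1 0) p.
Proof.
move=> p0 min0; have := count_splice (pred1 0) p (prow p) [:: pmin p + k].
rewrite (drop_nth 0 (prow_lt p0)) nth_prow //= take0 /= -/(hplace p) min0 eqxx.
by rewrite add0n eqn0Ngt k_gt0; lia.
Qed.

Lemma count0_vplace p : vfits p -> pmin p = 0 ->
  count (pred1 0) (vplace p) < count (pred1 0) p.
Proof.
move=> fits min0; have := count_splice (pred1 0) p (prow p) (nseq k (pmin p).+1).
rewrite size_nseq vfits_segment // !count_nseq -/(vplace p) min0 /=; lia.
Qed.

Fixpoint tcount p n N : nat :=
  if N is N'.+1 then
    if n <= pmin p then 0 else
      (if pmin p + k <= n then tcount (hplace p) n N' else 0) +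
      (if vfits p then tcount (vplace p) n N' else 0)
  else n <= pmin p.

Definition tcount_all p n := tcount p n (area n p %/ k).

Lemma tcount_allE p n : p != [::] -> pmin p < n ->
  tcount_all p n =
    (if pmin p + k <= n then tcount_all (hplace p) n else 0) +
    (if vfits p then tcount_all (vplace p) n else 0).
Proof.
move=> p0 lt_n; rewrite /tcount_all.
have areaS q : area n q + k = area n p -> area n p %/ k = (area n q %/ k).+1.
  by move=> <-; rewrite divnDr ?dvdnn // divnn k_gt0 addn1.
case E: (area n p %/ k) => [|N] /=; rewrite leqNgt lt_n /=.
  case: ifP => [/(area_hplace p0) /areaS | _]; first by rewrite E.
  by case: ifP => [/area_vplace /(_ lt_n) /areaS | _]; first by rewrite E.
congr (_ + _); first by case: ifP => [/(area_hplace p0) /areaS | //]; rewrite E => -[->].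
by case: ifP => [/area_vplace /(_ lt_n) /areaS | //]; rewrite E => -[->].
Qed.

Lemma tcount_shift p n N : 0 < pmin p -> tcount p n.+1 N = tcount (map predn p) n N.
Proof.
elim: N p => [|N IHN] p pos /=; rewrite pmin_map_predn.
  by have -> : (n.+1 <= pmin p) = (n <= (pmin p).-1) by lia.
have -> : (n.+1 <= pmin p) = (n <= (pmin p).-1) by lia.
have -> : (pmin p + k <= n.+1) = ((pmin p).-1 + k <= n) by lia.
rewrite vfits_map_predn // hplace_map_predn // vplace_map_predn //.
case: ifP => // _; congr (_ + _); case: ifP => // _.
all: apply: IHN; apply: leq_trans pos (pmin_splice _ _).
- exact: hplace_neq0.
- by move=> x; rewrite inE => /eqP ->; rewrite leq_addr.
- exact: vplace_neq0.
- by move=> x /nseqP [-> _].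
Qed.

Lemma tcount_all_shift p n : 0 < pmin p -> tcount_all p n.+1 = tcount_all (map predn p) n.
Proof. by move=> pos; rewrite /tcount_all area_map_predn // tcount_shift. Qed.

Fixpoint sweep f p : seq (seq nat) :=
  if f is f'.+1 then
    if 0 < pmin p then [:: p]
    else sweep f' (hplace p) ++ (if vfits p then sweep f' (vplace p) else [::])
  else [:: p].

Lemma sweep_pmin_gt0 f p : p != [::] -> count (pred1 0) p <= f ->
  all (fun q => 0 < pmin q) (sweep f p).
Proof.
elim: f p => [|f IHf] p p0 le_f /=.
  rewrite andbT lt0n; apply: contraTneq le_f => min0.
  by rewrite -ltnNge -has_count has_pred1 -min0 pmin_mem.
have [pos | ] := ltnP 0 (pmin p); first by rewrite /= pos.
rewrite leqn0 => /eqP min0; rewrite all_cat.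
rewrite IHf ?hplace_neq0 //=; last by rewrite -ltnS (leq_trans (count0_hplace p0 min0)).
case: ifP => // fits.
by rewrite IHf ?vplace_neq0 // -ltnS (leq_trans (count0_vplace fits min0)).
Qed.

Lemma tcount_all_sweep f p n : p != [::] -> k <= n ->
  tcount_all p n = sumn [seq tcount_all q n | q <- sweep f p].
Proof.
elim: f p => [|f IHf] p p0 le_kn /=; first by rewrite addn0.
have [pos | ] := ltnP 0 (pmin p); first by rewrite /= addn0.
rewrite leqn0 => /eqP min0; rewrite tcount_allE // ?min0 ?add0n ?le_kn; last by lia.
rewrite map_cat sumn_cat -IHf ?hplace_neq0 //.
by case: ifP => _; rewrite /= ?addn0 // -IHf ?vplace_neq0.
Qed.

(* The empty profile is junk: both sides vanish since n > 0. *)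
Lemma tcount_all_succ p n : k <= n ->
  tcount_all p n.+1 = sumn [seq tcount_all (map predn q) n | q <- sweep (size p) p].
Proof.
move=> le_kn; case: p => [|x p].
  rewrite /tcount_all /pmin /= div0n /=.
  by case: n le_kn => // /(leq_trans k_gt0).
rewrite (tcount_all_sweep (size (x :: p)) _ (leq_trans le_kn (leqnSn n))) //.
congr sumn; apply/eq_in_map => q.
have p0 : x :: p != [::] by [].
by move=> /(allP (sweep_pmin_gt0 p0 (count_size _ _))) /tcount_all_shift.
Qed.

End Placements.

Section Transfer.
Variable k : nat.
Hypothesis k_gt0 : 0 < k.
Local Open Scope ring_scope.
Local Notation comb := (seq (seq nat * int)).

Definition comb_eval n (u : comb) : int := \sum_(pc <- u) pc.2 * (tcount_all k pc.1 n)%:Z.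

(* Sweep each profile until its first column is covered, then delete that column. *)
Definition transfer (u : comb) : comb :=
  flatten [seq [seq (map predn q, pc.2) | q <- sweep k (size pc.1) pc.1] | pc <- u].

Fixpoint comb_add p c (u : comb) : comb :=
  if u is pc :: u' then
    if pc.1 == p then (p, pc.2 + c) :: u' else pc :: comb_add p c u'
  else [:: (p, c)].

Definition comb_collect (u : comb) : comb := foldr (fun pc => comb_add pc.1 pc.2) [::] u.

Definition comb_scale c (u : comb) : comb := [seq (pc.1, c * pc.2) | pc <- u].

Definition comb_iter j p : comb := iter j (comb_collect \o transfer) [:: (p, 1)].

Definition comb_lin (cs : seq (nat * int)) p : comb :=
  flatten [seq comb_scale jc.2 (comb_iter jc.1 p) | jc <- cs].

Lemma comb_eval_flatten n (us : seq comb) :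
  comb_eval n (flatten us) = \sum_(u <- us) comb_eval n u.
Proof. exact: big_flatten. Qed.

Lemma comb_eval_transfer n u : (k <= n)%N -> comb_eval n (transfer u) = comb_eval n.+1 u.
Proof.
move=> le_kn; rewrite comb_eval_flatten big_map; apply: eq_bigr => -[p c] _ /=.
rewrite /comb_eval big_map (tcount_all_succ k_gt0 _ le_kn) sumnE -natz natr_sum.
by rewrite mulr_sumr big_map; apply: eq_bigr => q _; rewrite natz.
Qed.

Lemma comb_eval_add n p c u :
  comb_eval n (comb_add p c u) = c * (tcount_all k p n)%:Z + comb_eval n u.
Proof.
elim: u => [|[q d] u IHu] /=; first by rewrite /comb_eval big_seq1 big_nil addr0.
case: eqP => [-> | _]; rewrite /comb_eval !big_cons /=; first by rewrite mulrDl addrCA addrA.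
by rewrite -/(comb_eval n _) IHu addrCA.
Qed.

Lemma comb_eval_collect n u : comb_eval n (comb_collect u) = comb_eval n u.
Proof.
elim: u => [|[p c] u IHu] //=.
by rewrite comb_eval_add IHu /comb_eval big_cons.
Qed.

Lemma comb_eval_scale n c u : comb_eval n (comb_scale c u) = c * comb_eval n u.
Proof. by rewrite /comb_eval big_map mulr_sumr; apply: eq_bigr => pc _; rewrite mulrA. Qed.

Lemma comb_eval_iter n j p : (k <= n)%N ->
  comb_eval n (comb_iter j p) = (tcount_all k p (n + j))%:Z.
Proof.
elim: j n => [|j IHj] n le_kn; first by rewrite /comb_eval big_seq1 mul1r addn0.
rewrite /comb_iter iterS /= comb_eval_collect comb_eval_transfer // -/(comb_iter j p).
by rewrite IHj ?addSnnS // (leq_trans le_kn).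
Qed.

Lemma tcount_all_lin_rec cs p n : (k <= n)%N ->
  all (fun pc => pc.2 == 0) (comb_collect (comb_lin cs p)) ->
  \sum_(jc <- cs) jc.2 * (tcount_all k p (n + jc.1))%:Z = 0.
Proof.
move=> le_kn zero.
have -> : \sum_(jc <- cs) jc.2 * (tcount_all k p (n + jc.1))%:Z =
    comb_eval n (comb_collect (comb_lin cs p)).
  rewrite comb_eval_collect comb_eval_flatten big_map.
  by apply: eq_bigr => jc _; rewrite comb_eval_scale comb_eval_iter.
by rewrite /comb_eval big_seq big1 // => pc /(allP zero) /eqP ->; rewrite mul0r.
Qed.

End Transfer.

Lemma sum_pick2 (I : finType) (a b : bool) (A B : I) (F : I -> nat) : (a -> b -> A != B) ->
  \sum_(i | (a && (i == A)) || (b && (i == B))) F i =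
    (if a then F A else 0) + (if b then F B else 0).
Proof.
case: a; case: b => /= neqAB; last by rewrite big_pred0_eq.
- rewrite (bigD1 A) ?eqxx //= (eq_bigl (pred1 B)) ?big_pred1_eq // => i /=.
  by case: (i =P A) => [->|]; rewrite ?andbF ?andbT // (negbTE (neqAB isT isT)).
- by rewrite (eq_bigl (pred1 A)) ?big_pred1_eq ?addn0 // => i; rewrite orbF.
- by rewrite big_pred1_eq.
Qed.

Section Rectangle.
Variables m n k : nat.
Hypotheses (m_gt0 : 0 < m) (k_gt1 : 1 < k).
Let k_gt0 : 0 < k := ltnW k_gt1.
Implicit Types p : seq nat.

Definition region p : {set cell m n} := [set c : cell m n | nth 0 p c.1 <= c.2].
Definition htile p := block m n 1 k (prow p) (pmin p).
Definition vtile p := block m n k 1 (prow p) (pmin p).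

Lemma profile_neq0 p : size p = m -> p != [::].
Proof. by move=> sp; rewrite -size_eq0 sp -lt0n. Qed.

Lemma region_eq0 p : size p = m -> (region p == set0) = (n <= pmin p).
Proof.
move=> sp; apply/eqP/idP => [/setP empty | le_n].
  rewrite leqNgt; apply/negP => lt_n.
  have r_lt : prow p < m by rewrite -sp prow_lt // profile_neq0.
  by have := empty (Ordinal r_lt, Ordinal lt_n); rewrite !inE /= nth_prow ?profile_neq0 ?leqnn.
apply/setP => c; rewrite !inE; apply/negbTE; rewrite -ltnNge.
by rewrite (leq_trans (ltn_ord c.2)) // (leq_trans le_n) // pmin_le_nth // sp.
Qed.

Lemma region_hplace p : size p = m -> region (hplace k p) = region p :\: htile p.
Proof.
move=> sp; apply/setP => -[i j]; rewrite !inE /= nth_hplace ?profile_neq0 //.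
by case: (ltngtP i (prow p)) => [lt_r | gt_r | ->]; rewrite ?nth_prow ?profile_neq0 //; lia.
Qed.

Lemma region_vplace p : size p = m -> vfits k p -> region (vplace k p) = region p :\: vtile p.
Proof.
move=> sp fits; apply/setP => -[i j]; rewrite !inE /= nth_vplace //.
by case: ifP => rows; rewrite ?(vfits_nth k_gt0 fits rows) //; lia.
Qed.


Section Corner.
Variables (p : seq nat) (x : cell m n).
Hypotheses (sp : size p = m) (x1 : x.1 = prow p :> nat) (x2 : x.2 = pmin p :> nat).

Lemma htile_at_corner : pmin p + k <= n ->
  [&& is_tile m n 1 k (htile p), x \in htile p & htile p \subset region p].
Proof.
move=> le_n; have r_lt : prow p < m by rewrite -sp prow_lt ?profile_neq0.
apply/and3P; split.
- apply/existsP; exists (inord (prow p)); apply/existsP; exists (inord (pmin p)).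
  by rewrite !inordK ?eqxx ?andbT ?addn1 ?r_lt ?le_n //; lia.
- by rewrite inE x1 x2; lia.
apply/subsetP => -[i j]; rewrite !inE /= => /andP [/andP [le_i lt_i] /andP [le_j _]].
have -> : (i : nat) = prow p by lia.
by rewrite nth_prow ?profile_neq0.
Qed.

Lemma vtile_at_corner : vfits k p ->
  [&& is_tile m n 1 k (vtile p), x \in vtile p & vtile p \subset region p].
Proof.
move=> fits; have /andP [le_m _] := fits; rewrite sp in le_m.
apply/and3P; split.
- apply/existsP; exists (inord (prow p)); apply/existsP; exists (inord (pmin p)).
  have := ltn_ord x.2; rewrite x2 => lt_n.
  by rewrite !inordK ?eqxx ?andbT ?addn1 ?le_m ?lt_n ?orbT //; lia.
- by rewrite inE x1 x2; lia.
apply/subsetP => -[i j]; rewrite !inE /= => /andP [rows /andP [le_j lt_j]].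
by rewrite (vfits_nth k_gt0 fits rows); lia.
Qed.

Lemma corner_hblock i j : i + 1 <= m -> j + k <= n -> x \in block m n 1 k i j ->
  block m n 1 k i j \subset region p ->
  (pmin p + k <= n) && (block m n 1 k i j == htile p).
Proof.
move=> le_m le_n; rewrite inE x1 x2 => /andP [/andP [le_i lt_i] /andP [le_j lt_j]] sub.
have ei : i = prow p by lia.
have i_lt : i < m by lia.
have j_lt : j < n by lia.
have ij_in : (Ordinal i_lt, Ordinal j_lt) \in block m n 1 k i j by rewrite inE /=; lia.
have := subsetP sub _ ij_in; rewrite inE /= ei nth_prow ?profile_neq0 // => le_mj.
have ej : j = pmin p by lia.
by rewrite /htile ej eqxx andbT -ej.
Qed.

Lemma corner_vblock i j : i + k <= m -> j + 1 <= n -> x \in block m n k 1 i j ->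
  block m n k 1 i j \subset region p ->
  vfits k p && (block m n k 1 i j == vtile p).
Proof.
move=> le_m le_n; rewrite inE x1 x2 => /andP [/andP [le_i lt_i] /andP [le_j lt_j]] sub.
have ej : j = pmin p by lia.
have col i' : i <= i' < i + k -> nth 0 p i' = pmin p.
  move=> rows; have i'_lt : i' < m by lia.
  have j_lt : j < n by lia.
  have ij_in : (Ordinal i'_lt, Ordinal j_lt) \in block m n k 1 i j by rewrite inE /=; lia.
  have := subsetP sub _ ij_in; rewrite inE /= => le_nth.
  by apply/eqP; rewrite eqn_leq pmin_le_nth ?sp // andbT -ej.
have ei : i = prow p.
  apply/eqP; rewrite eqn_leq le_i leqNgt; apply/negP => /pmin_lt_before_prow.
  by rewrite col ?ltnn //; lia.
rewrite /vtile -ei -ej eqxx andbT /vfits -ei sp le_m /=.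
apply/(all_nthP 0) => t; rewrite size_takel ?size_drop => [lt_t|]; last by lia.
by rewrite nth_take // nth_drop col /= ?eqxx // leq_addr ltn_add2l.
Qed.

Lemma corner_tiles T :
  [&& is_tile m n 1 k T, x \in T & T \subset region p] =
  (pmin p + k <= n) && (T == htile p) || vfits k p && (T == vtile p).
Proof.
apply/idP/idP.
  case/and3P => /existsP [i /existsP [j /orP [] /andP [/andP [le_m le_n] /eqP ->]]] xT sub.
    by rewrite (corner_hblock le_m le_n xT sub).
  by rewrite (corner_vblock le_m le_n xT sub) orbT.
case/orP => /andP [fits /eqP ->]; [exact: htile_at_corner | exact: vtile_at_corner].
Qed.

End Corner.

Lemma is_tile_neq0 T : is_tile m n 1 k T -> T != set0.
Proof.
case/existsP => i /existsP [j /orP [] /andP [/andP [le_m le_n] /eqP ->]].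
  have i_lt : i < m by lia.
  have j_lt : j < n by lia.
  by apply/set0Pn; exists (Ordinal i_lt, Ordinal j_lt); rewrite inE /=; lia.
have i_lt : i < m by lia.
have j_lt : j < n by lia.
by apply/set0Pn; exists (Ordinal i_lt, Ordinal j_lt); rewrite inE /=; lia.
Qed.

Lemma htile_neq_vtile p : size p = m -> pmin p + k <= n -> htile p != vtile p.
Proof.
move=> sp le_n; have r_lt : prow p < m by rewrite -sp prow_lt ?profile_neq0.
have c_lt : (pmin p).+1 < n by lia.
apply/negP => /eqP eq_hv.
have : (Ordinal r_lt, Ordinal c_lt) \in htile p by rewrite inE /=; lia.
by rewrite eq_hv inE /=; lia.
Qed.

Lemma card_tilings_region p N : size p = m ->
  #|tilings_by (is_tile m n 1 k) (region p) N| = tcount k p n N.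
Proof.
elim: N p => [|N IHN] p sp /=; first by rewrite card_tilings0 region_eq0.
case: leqP => [le_n | lt_n].
  have /eqP -> : region p == set0 by rewrite region_eq0.
  by rewrite tilings_set0S ?cards0 //; apply: is_tile_neq0.
have r_lt : prow p < m by rewrite -sp prow_lt ?profile_neq0.
pose x : cell m n := (Ordinal r_lt, Ordinal lt_n).
have x_in : x \in region p by rewrite inE /= nth_prow ?profile_neq0.
have [x1 x2] : x.1 = prow p :> nat /\ x.2 = pmin p :> nat by [].
rewrite (card_tilingsS is_tile_neq0 _ x_in) (eq_bigl _ _ (corner_tiles sp x1 x2)).
rewrite sum_pick2; last by move=> le_n _; apply: htile_neq_vtile.
congr (_ + _); case: ifP => // fits.
  by rewrite -region_hplace // IHN // size_hplace ?profile_neq0.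
by rewrite -region_vplace // IHN // size_vplace.
Qed.

Lemma num_tilings_tcount N : num_tilings m n 1 k N = tcount k (nseq m 0) n N.
Proof.
rewrite -card_tilings_region ?size_nseq //.
have -> : region (nseq m 0) = setT by apply/setP => c; rewrite !inE nth_nseq; case: ifP.
by apply: eq_card => P; rewrite !inE /tiling andbA.
Qed.

End Rectangle.

Local Open Scope ring_scope.

Definition flat5 : seq nat := nseq 5 0%N.

(* The coefficients of denom, as a relation between iterates 16, 12, 8, 4, 0 of
   the transfer: n columns of 5 x n take 5n/4 tiles, so z^5 counts 4 columns. *)
Definition rec_coeffs : seq (nat * int) :=
  [:: (16%N, 1); (12%N, -6); (8%N, 6); (4%N, -4); (0%N, 1)].

Lemma rec_certificate :
  all (fun pc => pc.2 == 0) (comb_collect (comb_lin 4 rec_coeffs flat5)).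
Proof. by vm_compute. Qed.

Definition lag (t : nat -> int) j N : int := if (j <= N)%N then t (N - j)%N else 0.

Lemma sum_coef_conv (d : {poly int}) t N :
  \sum_(i < N.+1) d`_i * t (N - i)%N = (d * \poly_(j < N.+1) t j)`_N.
Proof. by rewrite coefM; apply: eq_bigr => i _; rewrite coef_poly ltnS leq_subr. Qed.

Lemma coefXnM_poly j t N : ('X^j * \poly_(i < N.+1) t i)`_N = lag t j N.
Proof. by rewrite coefXnM coef_poly /lag ltnS leq_subr ltnNge; case: leqP. Qed.

Lemma denom_conv t N : \sum_(i < N.+1) denom`_i * t (N - i)%N =
  lag t 0 N - 6 * lag t 5 N + 6 * lag t 10 N - 4 * lag t 15 N + lag t 20 N.
Proof.
rewrite sum_coef_conv /denom -{1}(expr0 'X).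
rewrite !(mulrDl, mulNr) -!scalerAl !(coefD, coefN) !coefZ !coefXnM_poly; ring.
Qed.

Lemma numer_coef N :
  numer`_N = (N == 0)%N%:R - 3 * (N == 5)%N%:R + 3 * (N == 10)%N%:R - (N == 15)%N%:R.
Proof.
have -> : numer = 1 - 3%:R * 'X^5 + 3%:R * 'X^10 - 'X^15.
  by rewrite /numer (exprM 'X 5 2) (exprM 'X 5 3); ring.
by rewrite !(coefD, coefN) !mulr_natl !coefMn coef1 !coefXn.
Qed.

Lemma T14_5E N : T14_5 N = if (5 %| N)%N then tcount_all 4 flat5 (4 * (N %/ 5)) else 0%N.
Proof.
rewrite /T14_5; have -> : (5 %| 4 * N)%N = (5 %| N)%N by lia.
case: ifP => // /dvdnP [q ->]; rewrite num_tilings_tcount //.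
by rewrite /tcount_all /area map_nseq sumn_nseq; congr tcount; lia.
Qed.

Lemma tcount_flat5_rec n :
  (tcount_all 4 flat5 (n + 16))%:Z - 6 * (tcount_all 4 flat5 (n + 12))%:Z
  + 6 * (tcount_all 4 flat5 (n + 8))%:Z - 4 * (tcount_all 4 flat5 (n + 4))%:Z
  + (tcount_all 4 flat5 n)%:Z = 0.
Proof.
have [small | le4] := ltnP n 4; first by case: n small => [|[|[|[|]]]] //; vm_compute.
have := tcount_all_lin_rec (isT : (0 < 4)%N) le4 rec_certificate.
by rewrite /rec_coeffs !big_cons big_nil addn0 /= => <-; ring.
Qed.

Lemma T14_5_rec N : (20 <= N)%N ->
  (T14_5 N)%:Z - 6 * (T14_5 (N - 5))%:Z + 6 * (T14_5 (N - 10))%:Z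
  - 4 * (T14_5 (N - 15))%:Z + (T14_5 (N - 20))%:Z = 0.
Proof.
move=> le20; rewrite !T14_5E.
have [d5 | not5] := boolP (5 %| N)%N; last by rewrite !ifN //; lia.
rewrite !ifT; try lia.
have -> : (4 * (N %/ 5) = 4 * ((N - 20) %/ 5) + 16)%N by lia.
have -> : (4 * ((N - 5) %/ 5) = 4 * ((N - 20) %/ 5) + 12)%N by lia.
have -> : (4 * ((N - 10) %/ 5) = 4 * ((N - 20) %/ 5) + 8)%N by lia.
have -> : (4 * ((N - 15) %/ 5) = 4 * ((N - 20) %/ 5) + 4)%N by lia.
exact: tcount_flat5_rec.
Qed.

Theorem mainTheorem4 :
  forall N : nat,
    \sum_(k < N.+1) denom`_k * (T14_5 (N - k))%:Z = numer`_N.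
Proof.
move=> N; rewrite (denom_conv (fun j => (T14_5 j)%:Z)) numer_coef.
have [small | le20] := ltnP N 20.
  by move: N small; do 20! [case; first by rewrite /lag !T14_5E; vm_compute].
rewrite /lag leq0n subn0 !ifT ?gtn_eqF; try lia.
by rewrite T14_5_rec.
Qed.
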